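(* Let $k>l\ge0$ be integers with $k+l\ge3$, $n_0$ an integer with $l\le n_0<k$, $\Delta=k-l$, $f:\mathbb{N}\to[0,\infty)$, and set $\gamma_r=\beta^{lk}_{n_0+r\Delta}$, $\delta_r=f(n_0+r\Delta)$. Let $(d_r)_{r\in\mathbb{N}}$ be a solution, with arbitrary initial values $d_0,d_1\in\mathbb{C}$, of $$d_{r+2}-\frac{1+i\delta_{r+1}}{\gamma_{r+2}}d_{r+1}-\frac{\gamma_{r+1}}{\gamma_{r+2}}d_r=0\qquad(r\in\mathbb{N}).$$ Assume that $\delta_{r+1}/\gamma_{r+2}$ admits an asymptotic expansion in powers of $r^{-1/2}$, $$\frac{\delta_{r+1}}{\gamma_{r+2}}\sim\kappa+\frac{L_1}{r^{1/2}}+\frac{L_2}{r}+\cdots$$ with $\kappa<2$. Then $(d_r)_{r\in\mathbb{N}}\in\ell^2(\mathbb{N};\mathbb{C})$.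
   Context: For integers $x$ and $s\ge0$, $(x,s)=x(x+1)\cdots(x+s-1)$ ($=1$ if $s=0$), with the convention $(x,s)=0$ whenever $x$ is a negative integer; for integers $n$ and $k,l\ge0$, $\beta^{kl}_n=\sqrt{(n-l+1,l)(n-l+1,k)}$ (so $\gamma_r\neq0$ for $r\ge1$). A function $g:\mathbb{N}\to\mathbb{C}$ admits an asymptotic expansion $g(r)\sim\sum_{s\ge0}\lambda_sr^{-s/2}$ if for every $S\in\mathbb{N}$ there are $C,N$ with $|g(r)-\sum_{s=0}^S\lambda_sr^{-s/2}|\le Cr^{-(S+1)/2}$ for all $r\ge N$. *)

From Stdlib Require Import Reals ZArith.
From Coquelicot Require Import Coquelicot.
Open Scope R_scope.

(* Rising factorial (x,s) = x(x+1)...(x+s-1), (x,0)=1, with the convention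
   (x,s) = 0 whenever x is a negative integer. *)
Fixpoint rise_pos (x : Z) (s : nat) : R :=
  match s with
  | O => 1
  | S s' => rise_pos x s' * IZR (x + Z.of_nat s')
  end.

Definition poch (x : Z) (s : nat) : R :=
  if (x <? 0)%Z then 0 else rise_pos x s.

Definition beta (k l : nat) (n : Z) : R :=
  sqrt (poch (n - Z.of_nat l + 1) l * poch (n - Z.of_nat l + 1) k).

Definition asymp_expansion (g : nat -> R) (lam : nat -> R) : Prop :=
  forall S : nat, exists (Cst : R) (N : nat), forall r : nat, (N <= r)%nat -> (0 < r)%nat ->
    Rabs (g r - sum_f_R0 (fun s => lam s / (sqrt (INR r)) ^ s) S)
      <= Cst / (sqrt (INR r)) ^ (S + 1).

(* Write γ_r = β^{lk}_{n0+rΔ} and g_r = δ_{r+1}/γ_{r+2}, so that the recurrence reads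
   γ_{r+2} d_{r+2} = γ_{r+1} d_r + (1 + i g_r γ_{r+2}) d_{r+1}.  The quadratic form
     E_r = γ_{r+1}^2/γ_{r+2} |d_r|^2 + γ_{r+1} |d_{r+1}|^2 + g_r γ_{r+1} Im(d_r conj(d_{r+1}))
   is bounded below by a multiple of γ_{r+1} (|d_r|^2 + |d_{r+1}|^2) once g_r <= 2μ < 2 and
   γ_{r+1}/γ_{r+2} >= (1+μ)/2, which κ < 2 and γ_{r+1}/γ_{r+2} -> 1 provide for large r.
   The recurrence writes E_{r+1} - E_r in terms of the log-concavity defect
   γ_{r+2}^2/γ_{r+3} - γ_{r+1} = O(r^{-2} γ_{r+1}), of 1/γ_{r+2}, and of g_r - g_{r+1} = O(r^{-3/2})
   (read off the expansion); as γ_r grows like r^{(k+l)/2} >= r^{3/2}, this gives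
   E_{r+1} <= (1 + K r^{-3/2}) E_r.  A discrete Gronwall argument bounds E_r, hence
   |d_r|^2 = O(E_r / γ_{r+1}) = O(r^{-3/2}) is summable. *)

From Stdlib Require Import Reals ZArith Lra Lia Psatz.
From Coquelicot Require Import Coquelicot.
Open Scope R_scope.

Fixpoint rising (t : R) (s : nat) : R :=
  match s with O => 1 | S s' => rising t s' * (t + INR s') end.

Lemma poch_rising (x : Z) (s : nat) : (0 <= x)%Z -> poch x s = rising (IZR x) s.
Proof.
  intros Hx. unfold poch. destruct (Z.ltb_spec x 0) as [Hneg|_]; [lia|].
  induction s as [|s IH]; simpl; [reflexivity|].
  rewrite IH, plus_IZR, <- INR_IZR_INZ. reflexivity.
Qed.

Lemma rising_pos t s : 0 < t -> 0 < rising t s.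
Proof.
  intros Ht. induction s as [|s IH]; simpl; [lra|].
  pose proof (pos_INR s). apply Rmult_lt_0_compat; lra.
Qed.

Lemma pow_le_rising t s : 0 <= t -> t ^ s <= rising t s.
Proof.
  intros Ht. induction s as [|s IH]; simpl; [lra|].
  pose proof (pos_INR s). rewrite Rmult_comm.
  apply Rmult_le_compat; [apply pow_le; lra | lra | exact IH | lra].
Qed.

Lemma rising_shift_le t D s : 0 < t -> 0 <= D ->
  t ^ s * rising (t + D) s <= (t + D) ^ s * rising t s.
Proof.
  intros Ht HD. induction s as [|s IH]; simpl; [lra|].
  pose proof (pos_INR s).
  assert (0 <= t ^ s) by (apply pow_le; lra).
  assert (0 < rising (t + D) s) by (apply rising_pos; lra).
  replace (t * t ^ s * (rising (t + D) s * (t + D + INR s)))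
    with ((t ^ s * rising (t + D) s) * (t * (t + D + INR s))) by ring.
  replace ((t + D) * (t + D) ^ s * (rising t s * (t + INR s)))
    with (((t + D) ^ s * rising t s) * ((t + D) * (t + INR s))) by ring.
  apply Rmult_le_compat; [nra | nra | exact IH | nra].
Qed.

Lemma rising_log_concave t D s : 0 < t -> 0 <= D ->
  rising t s * rising (t + 2 * D) s <= rising (t + D) s ^ 2.
Proof.
  intros Ht HD. induction s as [|s IH]; simpl; [lra|].
  pose proof (pos_INR s).
  pose proof (rising_pos t s Ht). pose proof (rising_pos (t + 2 * D) s ltac:(lra)).
  replace (rising t s * (t + INR s) * (rising (t + 2 * D) s * (t + 2 * D + INR s)))
    with ((rising t s * rising (t + 2 * D) s) * ((t + INR s) * (t + 2 * D + INR s))) by ring.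
  replace (rising (t + D) s * (t + D + INR s) * (rising (t + D) s * (t + D + INR s) * 1))
    with (rising (t + D) s ^ 2 * (t + D + INR s) ^ 2) by ring.
  apply Rmult_le_compat; [nra | nra | exact IH | nra].
Qed.

(* Each factor satisfies (t+D+i)^2 = (t+i)(t+2D+i) + D^2 <= (t+i)(t+2D+i)(1 + (D/t)^2). *)
Lemma rising_sq_le t D s : 0 < t -> 0 <= D ->
  rising (t + D) s ^ 2 <= rising t s * rising (t + 2 * D) s * (1 + (D / t) ^ 2) ^ s.
Proof.
  intros Ht HD. set (u := (D / t) ^ 2).
  assert (Hu : D ^ 2 = t ^ 2 * u) by (unfold u; field; lra).
  assert (0 <= u) by (unfold u; apply pow2_ge_0).
  induction s as [|s IH]; simpl; [lra|].
  pose proof (pos_INR s).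
  set (Q := (t + INR s) * (t + 2 * D + INR s)).
  assert (HQ : (t + D + INR s) ^ 2 <= Q * (1 + u)).
  { replace ((t + D + INR s) ^ 2) with (Q + D ^ 2) by (unfold Q; ring).
    assert (t ^ 2 <= Q) by (unfold Q; nra). nra. }
  replace (rising (t + D) s * (t + D + INR s) * (rising (t + D) s * (t + D + INR s) * 1))
    with (rising (t + D) s ^ 2 * (t + D + INR s) ^ 2) by ring.
  replace (rising t s * (t + INR s) * (rising (t + 2 * D) s * (t + 2 * D + INR s))
           * ((1 + u) * (1 + u) ^ s))
    with ((rising t s * rising (t + 2 * D) s * (1 + u) ^ s) * (Q * (1 + u))) by (unfold Q; ring).
  apply Rmult_le_compat; [apply pow2_ge_0 | apply pow2_ge_0 | exact IH | exact HQ].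
Qed.

Lemma pow_one_add_le u n : 0 <= u <= 1 -> (1 + u) ^ n <= 1 + 3 ^ n * u.
Proof.
  intros Hu. induction n as [|n IH]; cbn [pow]; [lra|].
  assert (1 <= 3 ^ n) by (apply pow_R1_Rle; lra).
  assert (0 <= (1 + u) ^ n) by (apply pow_le; lra).
  assert ((1 + u) * (1 + u) ^ n <= (1 + u) * (1 + 3 ^ n * u)) by (apply Rmult_le_compat_l; lra).
  assert (3 ^ n * u * u <= 3 ^ n * u) by (assert (0 <= 3 ^ n * u) by nra; nra).
  nra.
Qed.

Lemma pow_one_sub_ge u n : 0 <= u <= 1 -> 1 - INR n * u <= (1 - u) ^ n.
Proof.
  intros Hu. induction n as [|n IH]; [simpl; lra|].
  rewrite S_INR. simpl.
  pose proof (pos_INR n). assert (0 <= (1 - u) ^ n) by (apply pow_le; lra).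
  nra.
Qed.

Definition weight (k l : nat) (t : R) : R := sqrt (rising t k * rising t l).

Lemma weight_sq k l t : 0 < t -> weight k l t ^ 2 = rising t k * rising t l.
Proof.
  intros Ht. apply pow2_sqrt.
  pose proof (rising_pos t k Ht). pose proof (rising_pos t l Ht). nra.
Qed.

Lemma weight_pos k l t : 0 < t -> 0 < weight k l t.
Proof.
  intros Ht. apply sqrt_lt_R0, Rmult_lt_0_compat; apply rising_pos, Ht.
Qed.

Lemma weight_growth k l t : (3 <= k + l)%nat -> 1 <= t -> sqrt t ^ 3 <= weight k l t.
Proof.
  intros Hkl Ht. unfold weight.
  rewrite <- (sqrt_pow2 (sqrt t ^ 3)) by (apply pow_le, sqrt_pos).
  apply sqrt_le_1_alt.
  replace ((sqrt t ^ 3) ^ 2) with ((sqrt t ^ 2) ^ 3) by ring. rewrite pow2_sqrt by lra.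
  apply Rle_trans with (t ^ (k + l)); [apply Rle_pow; [lra | lia]|].
  rewrite pow_add.
  apply Rmult_le_compat; try (apply pow_le; lra); apply pow_le_rising; lra.
Qed.

Lemma rising_prod_log_concave k l t D : 0 < t -> 0 <= D ->
  rising t k * rising t l * (rising (t + 2 * D) k * rising (t + 2 * D) l)
    <= (rising (t + D) k * rising (t + D) l) ^ 2.
Proof.
  intros Ht HD.
  pose proof (rising_log_concave t D k Ht HD). pose proof (rising_log_concave t D l Ht HD).
  pose proof (rising_pos t k Ht). pose proof (rising_pos t l Ht).
  pose proof (rising_pos (t + 2 * D) k ltac:(lra)). pose proof (rising_pos (t + 2 * D) l ltac:(lra)).
  replace (rising t k * rising t l * (rising (t + 2 * D) k * rising (t + 2 * D) l))
    with ((rising t k * rising (t + 2 * D) k) * (rising t l * rising (t + 2 * D) l)) by ring.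
  rewrite Rpow_mult_distr. apply Rmult_le_compat; nra.
Qed.

Lemma rising_prod_sq_le k l t D : 0 < t -> 0 <= D <= t ->
  (rising (t + D) k * rising (t + D) l) ^ 2
    <= rising t k * rising t l * (rising (t + 2 * D) k * rising (t + 2 * D) l)
       * (1 + 3 ^ (k + l) * (D / t) ^ 2).
Proof.
  intros Ht HD. set (u := (D / t) ^ 2).
  assert (Hu : 0 <= u <= 1).
  { split; [apply pow2_ge_0|]. rewrite <- (pow1 2). apply pow_incr.
    split; [apply Rdiv_le_0_compat | apply (Rdiv_le_1 D t Ht)]; lra. }
  pose proof (rising_sq_le t D k Ht ltac:(lra)). pose proof (rising_sq_le t D l Ht ltac:(lra)).
  pose proof (rising_pos t k Ht). pose proof (rising_pos t l Ht).
  pose proof (rising_pos (t + 2 * D) k ltac:(lra)). pose proof (rising_pos (t + 2 * D) l ltac:(lra)).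
  apply Rle_trans with
    (rising t k * rising t l * (rising (t + 2 * D) k * rising (t + 2 * D) l) * (1 + u) ^ (k + l)).
  - rewrite pow_add, Rpow_mult_distr.
    replace (rising t k * rising t l * (rising (t + 2 * D) k * rising (t + 2 * D) l)
             * ((1 + u) ^ k * (1 + u) ^ l))
      with ((rising t k * rising (t + 2 * D) k * (1 + u) ^ k)
            * (rising t l * rising (t + 2 * D) l * (1 + u) ^ l)) by ring.
    apply Rmult_le_compat; auto; apply pow2_ge_0.
  - apply Rmult_le_compat_l; [apply Rmult_le_pos; apply Rmult_le_pos; lra|]. apply pow_one_add_le, Hu.
Qed.

Lemma sqrt_mean_defect a b c e : 0 < a -> 0 < c -> 0 <= b -> 0 <= e ->
  a * c <= b ^ 2 <= a * c * (1 + e) -> 0 <= b / sqrt c - sqrt a <= e * sqrt a.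
Proof.
  intros Ha Hc Hb He [Hlow Hup].
  pose proof (sqrt_lt_R0 _ Ha). pose proof (sqrt_lt_R0 _ Hc).
  assert (Hgm : sqrt a * sqrt c = sqrt (a * c)) by (rewrite sqrt_mult; lra).
  assert (Hlow' : sqrt a * sqrt c <= b).
  { rewrite Hgm, <- (sqrt_pow2 b) by lra. apply sqrt_le_1_alt, Hlow. }
  assert (Hup' : b <= sqrt a * sqrt c * (1 + e)).
  { rewrite Hgm, <- (sqrt_pow2 b), <- (sqrt_pow2 (1 + e)), <- sqrt_mult by nra.
    apply sqrt_le_1_alt. nra. }
  replace (b / sqrt c - sqrt a) with ((b - sqrt a * sqrt c) / sqrt c) by (field; lra).
  split; [apply Rdiv_le_0_compat; lra|].
  apply Rmult_le_reg_r with (sqrt c); [lra|].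
  unfold Rdiv. rewrite Rmult_assoc, Rinv_l, Rmult_1_r by lra. nra.
Qed.

Lemma weight_log_concave_defect k l t D : 0 < t -> 0 <= D <= t ->
  0 <= weight k l (t + D) ^ 2 / weight k l (t + 2 * D) - weight k l t
    <= 3 ^ (k + l) * (D / t) ^ 2 * weight k l t.
Proof.
  intros Ht HD. rewrite weight_sq by lra. unfold weight.
  apply sqrt_mean_defect.
  - apply Rmult_lt_0_compat; apply rising_pos; lra.
  - apply Rmult_lt_0_compat; apply rising_pos; lra.
  - apply Rmult_le_pos; left; apply rising_pos; lra.
  - apply Rmult_le_pos; [apply pow_le; lra | apply pow2_ge_0].
  - split; [apply rising_prod_log_concave | apply rising_prod_sq_le]; lra.
Qed.

Lemma rising_prod_shift_le k l t D : 0 < t -> 0 <= D ->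
  t ^ (k + l) * (rising (t + D) k * rising (t + D) l)
    <= (t + D) ^ (k + l) * (rising t k * rising t l).
Proof.
  intros Ht HD. rewrite !pow_add.
  pose proof (rising_shift_le t D k Ht HD). pose proof (rising_shift_le t D l Ht HD).
  pose proof (rising_pos (t + D) k ltac:(lra)). pose proof (rising_pos (t + D) l ltac:(lra)).
  replace (t ^ k * t ^ l * (rising (t + D) k * rising (t + D) l))
    with ((t ^ k * rising (t + D) k) * (t ^ l * rising (t + D) l)) by ring.
  replace ((t + D) ^ k * (t + D) ^ l * (rising t k * rising t l))
    with (((t + D) ^ k * rising t k) * ((t + D) ^ l * rising t l)) by ring.
  apply Rmult_le_compat; auto; apply Rmult_le_pos; try (apply pow_le; lra); lra.
Qed.

Lemma weight_ratio_sq k l t D : 0 < t -> 0 <= D ->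
  1 - INR (k + l) * D / t <= (weight k l t / weight k l (t + D)) ^ 2.
Proof.
  intros Ht HD.
  pose proof (rising_pos t k Ht). pose proof (rising_pos t l Ht).
  pose proof (rising_pos (t + D) k ltac:(lra)). pose proof (rising_pos (t + D) l ltac:(lra)).
  pose proof (rising_prod_shift_le k l t D Ht HD) as Hshift.
  assert (Hbern : 1 - INR (k + l) * (D / (t + D)) <= (t / (t + D)) ^ (k + l)).
  { replace (t / (t + D)) with (1 - D / (t + D)) by (field; lra).
    apply pow_one_sub_ge. split; [apply Rdiv_le_0_compat | apply (Rdiv_le_1 D (t + D))]; lra. }
  assert (Hdt : D / (t + D) <= D / t).
  { apply Rmult_le_compat_l; [lra|]. apply Rinv_le_contravar; lra. }
  assert (Hsq : (weight k l t / weight k l (t + D)) ^ 2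
                = (rising t k * rising t l) / (rising (t + D) k * rising (t + D) l)).
  { unfold Rdiv. rewrite Rpow_mult_distr, pow_inv, !weight_sq by lra. reflexivity. }
  assert (Hpow : (t / (t + D)) ^ (k + l)
                 <= (rising t k * rising t l) / (rising (t + D) k * rising (t + D) l)).
  { pose proof (pow_lt (t + D) (k + l) ltac:(lra)).
    unfold Rdiv. rewrite Rpow_mult_distr, pow_inv.
    apply Rmult_le_reg_r with ((t + D) ^ (k + l) * (rising (t + D) k * rising (t + D) l)).
    { apply Rmult_lt_0_compat; [lra | apply Rmult_lt_0_compat; lra]. }
    replace (t ^ (k + l) * / (t + D) ^ (k + l)
             * ((t + D) ^ (k + l) * (rising (t + D) k * rising (t + D) l)))
      with (t ^ (k + l) * (rising (t + D) k * rising (t + D) l)) by (field; lra).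
    replace (rising t k * rising t l * / (rising (t + D) k * rising (t + D) l)
             * ((t + D) ^ (k + l) * (rising (t + D) k * rising (t + D) l)))
      with ((t + D) ^ (k + l) * (rising t k * rising t l)) by (field; lra).
    exact Hshift. }
  assert (Hn : INR (k + l) * (D / (t + D)) <= INR (k + l) * D / t).
  { unfold Rdiv at 2. rewrite Rmult_assoc. apply Rmult_le_compat_l; [apply pos_INR | exact Hdt]. }
  lra.
Qed.

Lemma sqrt_INR_ge_1 r : (1 <= r)%nat -> 1 <= sqrt (INR r).
Proof.
  intros Hr. rewrite <- sqrt_1. apply sqrt_le_1_alt. apply (le_INR 1), Hr.
Qed.

Lemma sqrt_INR_succ_sq r : sqrt (INR (S r)) ^ 2 = sqrt (INR r) ^ 2 + 1.
Proof.
  pose proof (pos_INR r). rewrite S_INR, !pow2_sqrt; lra.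
Qed.

Lemma sqrt_INR_le_succ r : sqrt (INR r) <= sqrt (INR (S r)).
Proof. apply sqrt_le_1_alt, le_INR; lia. Qed.

Lemma inv_sqrt_INR_diff r : (1 <= r)%nat ->
  / sqrt (INR r) - / sqrt (INR (S r))
    = / ((sqrt (INR r) + sqrt (INR (S r))) * sqrt (INR r) * sqrt (INR (S r))).
Proof.
  intros Hr. pose proof (sqrt_INR_ge_1 r Hr). pose proof (sqrt_INR_succ_sq r).
  pose proof (sqrt_INR_le_succ r).
  set (s := sqrt (INR r)) in *. set (s' := sqrt (INR (S r))) in *.
  field_simplify_eq; [nra | lra].
Qed.

Lemma inv_sqrt_INR_diff_le r : (1 <= r)%nat ->
  0 <= / sqrt (INR r) - / sqrt (INR (S r)) <= / sqrt (INR r) ^ 3.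
Proof.
  intros Hr. rewrite inv_sqrt_INR_diff by exact Hr.
  pose proof (sqrt_INR_ge_1 r Hr). pose proof (sqrt_INR_le_succ r).
  set (s := sqrt (INR r)) in *. set (s' := sqrt (INR (S r))) in *.
  split.
  - left. apply Rinv_0_lt_compat. apply Rmult_lt_0_compat; [apply Rmult_lt_0_compat|]; lra.
  - apply Rinv_le_contravar; [apply pow_lt; lra | nra].
Qed.

Lemma inv_sqrt_pow3_le_diff r : (1 <= r)%nat ->
  / sqrt (INR r) ^ 3 <= 6 * (/ sqrt (INR r) - / sqrt (INR (S r))).
Proof.
  intros Hr. rewrite inv_sqrt_INR_diff by exact Hr.
  pose proof (sqrt_INR_ge_1 r Hr). pose proof (sqrt_INR_succ_sq r).
  pose proof (sqrt_INR_le_succ r).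
  set (s := sqrt (INR r)) in *. set (s' := sqrt (INR (S r))) in *.
  assert (Hs' : s' <= 2 * s) by nra.
  assert (Hden : 0 < (s + s') * s * s') by (apply Rmult_lt_0_compat; [apply Rmult_lt_0_compat|]; lra).
  replace (6 * / ((s + s') * s * s')) with (/ ((s + s') * s * s' / 6)) by (field; lra).
  apply Rinv_le_contravar; [lra | nra].
Qed.

Lemma inv_sqrt_sq_INR_diff_le r : (1 <= r)%nat ->
  0 <= / sqrt (INR r) ^ 2 - / sqrt (INR (S r)) ^ 2 <= / sqrt (INR r) ^ 3.
Proof.
  intros Hr. pose proof (sqrt_INR_ge_1 r Hr). pose proof (sqrt_INR_succ_sq r).
  set (s := sqrt (INR r)) in *. set (s' := sqrt (INR (S r))) in *.
  replace (/ s ^ 2 - / s' ^ 2) with (/ (s ^ 2 * s' ^ 2)) by (field_simplify_eq; nra).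
  split.
  - left. apply Rinv_0_lt_compat. nra.
  - apply Rinv_le_contravar; [apply pow_lt; lra | nra].
Qed.

Lemma inv_sqrt_pow3_succ_le r : (1 <= r)%nat ->
  / sqrt (INR (S r)) ^ 3 <= / sqrt (INR r) ^ 3.
Proof.
  intros Hr. pose proof (sqrt_INR_ge_1 r Hr). pose proof (sqrt_INR_le_succ r).
  apply Rinv_le_contravar; [apply pow_lt; lra|]. apply pow_incr; lra.
Qed.

Lemma asymp_expansion_eventually_le g lam B : asymp_expansion g lam -> lam 0%nat < B ->
  exists N, forall r, (N <= r)%nat -> g r <= B.
Proof.
  intros Hg HB. destruct (Hg 0%nat) as [C [N0 HN0]].
  destruct (INR_unbounded ((Rabs C / (B - lam 0%nat)) ^ 2)) as [N1 HN1].
  exists (Nat.max (Nat.max N0 N1) 1). intros r Hr.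
  specialize (HN0 r ltac:(lia) ltac:(lia)). simpl in HN0.
  pose proof (sqrt_INR_ge_1 r ltac:(lia)).
  set (s := sqrt (INR r)) in *.
  assert (Hs : Rabs C / (B - lam 0%nat) < s).
  { apply Rsqr_incrst_0; [| apply Rdiv_le_0_compat; [apply Rabs_pos | lra] | lra].
    unfold Rsqr, s. rewrite sqrt_sqrt by apply pos_INR.
    assert (INR N1 <= INR r) by (apply le_INR; lia). nra. }
  assert (HC : C / (s * 1) <= B - lam 0%nat).
  { rewrite Rmult_1_r. apply Rmult_le_reg_r with s; [lra|].
    unfold Rdiv in *. rewrite Rmult_assoc, Rinv_l, Rmult_1_r by lra.
    apply Rmult_lt_compat_r with (r := B - lam 0%nat) in Hs; [|lra].
    rewrite Rmult_assoc, Rinv_l, Rmult_1_r in Hs by lra.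
    pose proof (Rle_abs C). lra. }
  apply Rabs_le_between in HN0. lra.
Qed.

Lemma asymp_expansion_order2 g lam : asymp_expansion g lam ->
  exists C N, 0 <= C /\ forall n, (N <= n)%nat ->
    Rabs (g n - (lam 0%nat + lam 1%nat * / sqrt (INR n) + lam 2%nat * / sqrt (INR n) ^ 2))
      <= C * / sqrt (INR n) ^ 3.
Proof.
  intros Hg. destruct (Hg 2%nat) as [C [N HN]].
  exists (Rabs C), (Nat.max N 1). split; [apply Rabs_pos|]. intros n Hn.
  specialize (HN n ltac:(lia) ltac:(lia)). simpl in HN.
  pose proof (sqrt_INR_ge_1 n ltac:(lia)).
  replace (lam 0%nat / 1 + lam 1%nat / (sqrt (INR n) * 1)
           + lam 2%nat / (sqrt (INR n) * (sqrt (INR n) * 1)))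
    with (lam 0%nat + lam 1%nat * / sqrt (INR n) + lam 2%nat * / sqrt (INR n) ^ 2)
    in HN by (field; lra).
  eapply Rle_trans; [exact HN|].
  unfold Rdiv. apply Rmult_le_compat_r; [|apply Rle_abs].
  left. apply Rinv_0_lt_compat, pow_lt. lra.
Qed.

Lemma asymp_expansion_increment g lam : asymp_expansion g lam ->
  exists c N, 0 <= c /\ forall r, (N <= r)%nat -> Rabs (g r - g (S r)) <= c / sqrt (INR r) ^ 3.
Proof.
  intros Hg. destruct (asymp_expansion_order2 g lam Hg) as [C [N [HC Hexp]]].
  exists (Rabs (lam 1%nat) + Rabs (lam 2%nat) + 2 * C), (Nat.max N 1).
  split; [pose proof (Rabs_pos (lam 1%nat)); pose proof (Rabs_pos (lam 2%nat)); lra|].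
  intros r Hr.
  pose proof (Hexp r ltac:(lia)) as Er. pose proof (Hexp (S r) ltac:(lia)) as Es.
  assert (Hdec : C * / sqrt (INR (S r)) ^ 3 <= C * / sqrt (INR r) ^ 3).
  { apply Rmult_le_compat_l; [exact HC | apply inv_sqrt_pow3_succ_le; lia]. }
  pose proof (inv_sqrt_INR_diff_le r ltac:(lia)) as D1.
  pose proof (inv_sqrt_sq_INR_diff_le r ltac:(lia)) as D2.
  set (w := / sqrt (INR r) ^ 3) in *.
  set (a1 := / sqrt (INR r) - / sqrt (INR (S r))) in *.
  set (a2 := / sqrt (INR r) ^ 2 - / sqrt (INR (S r)) ^ 2) in *.
  assert (T1 : Rabs (lam 1%nat * a1) <= Rabs (lam 1%nat) * w).
  { rewrite Rabs_mult, (Rabs_pos_eq a1) by lra. apply Rmult_le_compat_l; [apply Rabs_pos | lra]. }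
  assert (T2 : Rabs (lam 2%nat * a2) <= Rabs (lam 2%nat) * w).
  { rewrite Rabs_mult, (Rabs_pos_eq a2) by lra. apply Rmult_le_compat_l; [apply Rabs_pos | lra]. }
  apply Rabs_le_between in Er, Es, T1, T2.
  unfold a1, a2 in T1, T2. unfold Rdiv. fold w.
  apply Rabs_le. lra.
Qed.

Lemma ex_series_telescoping_bound (a tau : nat -> R) (N : nat) :
  (forall n, 0 <= a n) -> (forall n, 0 <= tau n) ->
  (forall n, (N <= n)%nat -> a n <= tau n - tau (S n)) -> ex_series a.
Proof.
  intros Ha Htau Hle.
  assert (Hincr : forall n, sum_n a n <= sum_n a (S n)).
  { intros n. rewrite sum_Sn. unfold plus. simpl. pose proof (Ha (S n)). lra. }
  assert (Htel : forall m, sum_n a (N + m) <= sum_n a N + tau (S N) - tau (S (N + m))).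
  { induction m as [|m IH]; [rewrite Nat.add_0_r; lra|].
    rewrite Nat.add_succ_r, sum_Sn. unfold plus. simpl.
    pose proof (Hle (S (N + m)) ltac:(lia)). lra. }
  destruct (ex_finite_lim_seq_incr (sum_n a) (sum_n a N + tau (S N)) Hincr) as [l Hl].
  - intros n. destruct (Nat.le_gt_cases N n) as [HNn | HnN].
    + replace n with (N + (n - N))%nat by lia.
      pose proof (Htel (n - N)%nat). pose proof (Htau (S (N + (n - N)))). lra.
    + assert (Hmono : forall m, sum_n a n <= sum_n a (n + m)).
      { induction m as [|m IH]; [rewrite Nat.add_0_r; lra|].
        rewrite Nat.add_succ_r. pose proof (Hincr (n + m)%nat). lra. }
      pose proof (Hmono (N - n)%nat). replace (n + (N - n))%nat with N in * by lia.
      pose proof (Htau (S N)). lra.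
  - exists l. exact Hl.
Qed.

Lemma inv_sqrt_INR_nonneg n : 0 <= / sqrt (INR n).
Proof.
  destruct n as [|n].
  - simpl. rewrite sqrt_0, Rinv_0. lra.
  - left. apply Rinv_0_lt_compat, sqrt_lt_R0, lt_0_INR. lia.
Qed.

Lemma ex_series_inv_sqrt_pow3 : ex_series (fun n => / sqrt (INR n) ^ 3).
Proof.
  apply (ex_series_telescoping_bound _ (fun n => 6 * / sqrt (INR n)) 1).
  - intros n. rewrite <- pow_inv. apply pow_le, inv_sqrt_INR_nonneg.
  - intros n. pose proof (inv_sqrt_INR_nonneg n). lra.
  - intros n Hn. pose proof (inv_sqrt_pow3_le_diff n Hn). lra.
Qed.

Lemma exp_le_compat x y : x <= y -> exp x <= exp y.
Proof.
  intros Hxy. replace y with (x + (y - x)) by ring. rewrite exp_plus.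
  pose proof (exp_pos x). pose proof (exp_ineq1_le (y - x)). nra.
Qed.

Lemma discrete_gronwall (E a tau : nat -> R) (N : nat) :
  (forall r, (N <= r)%nat -> 0 <= E r) ->
  (forall r, (N <= r)%nat -> E (S r) <= (1 + a r) * E r) ->
  (forall r, (N <= r)%nat -> a r <= tau r - tau (S r)) ->
  (forall r, 0 <= tau r) ->
  forall r, (N <= r)%nat -> E r <= E N * exp (tau N).
Proof.
  intros HE Hstep Ha Htau.
  assert (Hinv : forall m, E (N + m)%nat * exp (tau (N + m)%nat) <= E N * exp (tau N)).
  { induction m as [|m IH]; [rewrite Nat.add_0_r; lra|].
    rewrite Nat.add_succ_r. set (x := (N + m)%nat) in *.
    assert (Hx : (N <= x)%nat) by lia.
    pose proof (HE x Hx). pose proof (exp_pos (tau (S x))).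
    assert (Hexp : (1 + a x) * exp (tau (S x)) <= exp (tau x)).
    { apply Rle_trans with (exp (a x) * exp (tau (S x))).
      - apply Rmult_le_compat_r; [lra | apply exp_ineq1_le].
      - rewrite <- exp_plus. apply exp_le_compat. pose proof (Ha x Hx). lra. }
    apply Rle_trans with ((1 + a x) * E x * exp (tau (S x))).
    - apply Rmult_le_compat_r; [lra | exact (Hstep x Hx)].
    - eapply Rle_trans; [| exact IH]. nra. }
  intros r Hr. replace r with (N + (r - N))%nat by lia.
  pose proof (Hinv (r - N)%nat). pose proof (HE (N + (r - N))%nat ltac:(lia)).
  assert (1 <= exp (tau (N + (r - N))%nat)).
  { rewrite <- exp_0. apply exp_le_compat, Htau. }
  nra.
Qed.

Definition energy_form (G1 G2 g : R) (x y : C) : R :=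
  G1 ^ 2 / G2 * Cmod x ^ 2 + G1 * Cmod y ^ 2 + g * G1 * Im (x * Cconj y).

Lemma Im_mul_conj_le x y : Rabs (Im (x * Cconj y)) <= (Cmod x ^ 2 + Cmod y ^ 2) / 2.
Proof.
  destruct x as [x1 x2], y as [y1 y2]. rewrite !Cmod2_alt. simpl.
  pose proof (pow2_ge_0 (x2 - y1)). pose proof (pow2_ge_0 (x1 + y2)).
  pose proof (pow2_ge_0 (x2 + y1)). pose proof (pow2_ge_0 (x1 - y2)).
  apply Rabs_le. split; nra.
Qed.

Lemma Re_mul_conj_le x y : Rabs (Re (x * Cconj y)) <= (Cmod x ^ 2 + Cmod y ^ 2) / 2.
Proof.
  destruct x as [x1 x2], y as [y1 y2]. rewrite !Cmod2_alt. simpl.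
  pose proof (pow2_ge_0 (x1 - y1)). pose proof (pow2_ge_0 (x2 - y2)).
  pose proof (pow2_ge_0 (x1 + y1)). pose proof (pow2_ge_0 (x2 + y2)).
  apply Rabs_le. split; nra.
Qed.

Lemma energy_form_succ G1 G2 G3 g g' x y z : G2 <> 0 -> G3 <> 0 ->
  (RtoC G2 * z = RtoC G1 * x + (1 + Ci * RtoC (g * G2)) * y)%C ->
  energy_form G2 G3 g' y z - energy_form G1 G2 g x y
  = Cmod y ^ 2 * (G2 ^ 2 / G3 - G1 + / G2 + g * G2 * (g - g'))
    + (g - g') * G1 * Im (x * Cconj y) + 2 * (G1 / G2) * Re (x * Cconj y).
Proof.
  intros H2 H3 Hz. destruct x as [x1 x2], y as [y1 y2], z as [z1 z2].
  unfold Cmult, Cplus, RtoC, Ci in Hz. simpl in Hz. injection Hz as Hz1 Hz2.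
  assert (E1 : z1 = (G1 * x1 + y1 - g * G2 * y2) / G2) by (field_simplify_eq; lra).
  assert (E2 : z2 = (G1 * x2 + y2 + g * G2 * y1) / G2) by (field_simplify_eq; lra).
  unfold energy_form. rewrite !Cmod2_alt. simpl. rewrite E1, E2. field. split; auto.
Qed.

Lemma energy_form_lower G1 G2 g mu x y : 0 < G1 -> 0 < G2 -> 0 <= g <= 2 * mu -> mu < 1 ->
  (1 + mu) / 2 <= G1 / G2 ->
  (1 - mu) / 2 * G1 * (Cmod x ^ 2 + Cmod y ^ 2) <= energy_form G1 G2 g x y.
Proof.
  intros HG1 HG2 Hg Hmu Hratio. unfold energy_form.
  pose proof (Im_mul_conj_le x y) as HI.
  pose proof (pow2_ge_0 (Cmod x)). pose proof (pow2_ge_0 (Cmod y)).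
  set (X := Cmod x ^ 2) in *. set (Y := Cmod y ^ 2) in *.
  set (I := Im (x * Cconj y)) in *.
  assert (HgI : Rabs (g * I) <= mu * (X + Y)).
  { rewrite Rabs_mult, (Rabs_pos_eq g) by lra. nra. }
  apply Rabs_le_between in HgI.
  replace (G1 ^ 2 / G2) with (G1 * (G1 / G2)) by (field; lra).
  replace (G1 * (G1 / G2) * X + G1 * Y + g * G1 * I)
    with (G1 * (G1 / G2 * X + Y + g * I)) by ring.
  replace ((1 - mu) / 2 * G1 * (X + Y)) with (G1 * ((1 - mu) / 2 * (X + Y))) by ring.
  apply Rmult_le_compat_l; nra.
Qed.

Section EnergyMethod.

Variables (gam g : nat -> R) (d : nat -> C) (mu c1 c2 : R) (N : nat).

Hypothesis N_pos : (1 <= N)%nat.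
Hypothesis mu_lt_1 : mu < 1.
Hypothesis c1_nonneg : 0 <= c1.
Hypothesis c2_nonneg : 0 <= c2.
Hypothesis recurrence : forall r, (N <= r)%nat ->
  (RtoC (gam (S (S r))) * d (S (S r))
   = RtoC (gam (S r)) * d r + (1 + Ci * RtoC (g r * gam (S (S r)))) * d (S r))%C.
Hypothesis gam_growth : forall r, (N <= r)%nat -> sqrt (INR r) ^ 3 <= gam (S r).
Hypothesis gam_ratio : forall r, (N <= r)%nat -> (1 + mu) / 2 <= gam (S r) / gam (S (S r)).
Hypothesis gam_log_concave_defect : forall r, (N <= r)%nat ->
  0 <= gam (S (S r)) ^ 2 / gam (S (S (S r))) - gam (S r) <= c1 / sqrt (INR r) ^ 3 * gam (S r).
Hypothesis g_bounds : forall r, (N <= r)%nat -> 0 <= g r <= 2 * mu.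
Hypothesis g_increment : forall r, (N <= r)%nat -> Rabs (g r - g (S r)) <= c2 / sqrt (INR r) ^ 3.

Let energy r := energy_form (gam (S r)) (gam (S (S r))) (g r) (d r) (d (S r)).

Lemma gam_succ_ge r : (N <= r)%nat -> 1 <= sqrt (INR r) ^ 3 <= gam (S r).
Proof.
  intros Hr. split; [|apply gam_growth, Hr].
  apply pow_R1_Rle, sqrt_INR_ge_1. lia.
Qed.

Lemma energy_lower r : (N <= r)%nat ->
  (1 - mu) / 2 * gam (S r) * (Cmod (d r) ^ 2 + Cmod (d (S r)) ^ 2) <= energy r.
Proof.
  intros Hr. pose proof (gam_succ_ge r Hr). pose proof (gam_succ_ge (S r) ltac:(lia)).
  apply energy_form_lower; [lra | lra | apply g_bounds, Hr | exact mu_lt_1 | apply gam_ratio, Hr].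
Qed.

Lemma gam_succ_le_twice r : (N <= r)%nat -> gam (S (S r)) <= 2 * gam (S r).
Proof.
  intros Hr. pose proof (gam_succ_ge (S r) ltac:(lia)). pose proof (g_bounds r Hr).
  pose proof (gam_ratio r Hr) as Hratio.
  apply Rmult_le_compat_r with (r := gam (S (S r))) in Hratio; [|lra].
  replace (gam (S r) / gam (S (S r)) * gam (S (S r))) with (gam (S r)) in Hratio by (field; lra).
  nra.
Qed.

Lemma inv_gam_succ_le r : (N <= r)%nat -> / gam (S (S r)) <= / sqrt (INR r) ^ 3.
Proof.
  intros Hr. pose proof (gam_succ_ge (S r) ltac:(lia)).
  eapply Rle_trans; [apply Rinv_le_contravar | apply inv_sqrt_pow3_succ_le]; lra || lia.
Qed.

Lemma energy_increment_eq r : (N <= r)%nat ->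
  energy (S r) - energy r
    = Cmod (d (S r)) ^ 2 * (gam (S (S r)) ^ 2 / gam (S (S (S r))) - gam (S r) + / gam (S (S r))
                            + g r * gam (S (S r)) * (g r - g (S r)))
      + (g r - g (S r)) * gam (S r) * Im (d r * Cconj (d (S r)))
      + 2 * (gam (S r) / gam (S (S r))) * Re (d r * Cconj (d (S r))).
Proof.
  intros Hr. pose proof (gam_succ_ge (S r) ltac:(lia)). pose proof (gam_succ_ge (S (S r)) ltac:(lia)).
  apply energy_form_succ; [lra | lra | apply recurrence, Hr].
Qed.

Lemma energy_increment_le r : (N <= r)%nat ->
  energy (S r) - energy r
    <= (c1 + 2 + 5 * c2) / sqrt (INR r) ^ 3 * gam (S r) * (Cmod (d r) ^ 2 + Cmod (d (S r)) ^ 2).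
Proof.
  intros Hr. rewrite energy_increment_eq by exact Hr.
  pose proof (gam_succ_ge r Hr) as HG1. pose proof (gam_succ_ge (S r) ltac:(lia)) as HG2.
  pose proof (gam_succ_le_twice r Hr) as HG21. pose proof (inv_gam_succ_le r Hr) as Hinv2.
  pose proof (g_bounds r Hr) as Hg. pose proof (gam_log_concave_defect r Hr) as Hconc.
  pose proof (g_increment r Hr) as Hinc.
  pose proof (Im_mul_conj_le (d r) (d (S r))) as HI.
  pose proof (Re_mul_conj_le (d r) (d (S r))) as HRe.
  set (G1 := gam (S r)) in *. set (G2 := gam (S (S r))) in *.
  set (X := Cmod (d r) ^ 2). set (Y := Cmod (d (S r)) ^ 2).
  set (I := Im (d r * Cconj (d (S r)))) in *. set (Re' := Re (d r * Cconj (d (S r)))) in *.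
  set (w := / sqrt (INR r) ^ 3) in *.
  unfold Rdiv in Hconc, Hinc |- *. fold w in Hconc, Hinc |- *.
  assert (Hw : 0 < w) by (apply Rinv_0_lt_compat; lra).
  assert (HX : 0 <= X) by apply pow2_ge_0. assert (HY : 0 <= Y) by apply pow2_ge_0.
  assert (Hc1 : 0 <= c1 * w * G1) by (apply Rmult_le_pos; [apply Rmult_le_pos|]; lra).
  assert (Hc2 : 0 <= c2 * w) by (apply Rmult_le_pos; lra).
  assert (Hdrift : Rabs (g r * G2 * (g r - g (S r))) <= 4 * (c2 * w) * G1).
  { rewrite !Rabs_mult, (Rabs_pos_eq (g r)), (Rabs_pos_eq G2) by lra.
    apply Rle_trans with (4 * G1 * Rabs (g r - g (S r))); [|nra].
    apply Rmult_le_compat_r; [apply Rabs_pos | nra]. }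
  assert (Hcross : Rabs ((g r - g (S r)) * G1 * I) <= c2 * w * G1 * ((X + Y) / 2)).
  { rewrite !Rabs_mult, (Rabs_pos_eq G1) by lra.
    apply Rmult_le_compat; [| apply Rabs_pos | | exact HI].
    - apply Rmult_le_pos; [apply Rabs_pos | lra].
    - apply Rmult_le_compat_r; lra. }
  assert (Hdot : Rabs (2 * (G1 * / G2) * Re') <= 2 * (w * G1) * ((X + Y) / 2)).
  { assert (0 <= / G2) by (left; apply Rinv_0_lt_compat; lra).
    rewrite Rabs_mult, (Rabs_pos_eq (2 * (G1 * / G2))) by nra.
    apply Rmult_le_compat; [nra | apply Rabs_pos | nra | exact HRe]. }
  apply Rabs_le_between in Hdrift, Hcross, Hdot.
  assert (Y * (G2 ^ 2 * / gam (S (S (S r))) - G1 + / G2 + g r * G2 * (g r - g (S r)))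
          <= Y * (c1 * w * G1 + w * G1 + 4 * (c2 * w) * G1)).
  { apply Rmult_le_compat_l; [exact HY|]. nra. }
  assert (0 <= w * G1 * X) by (apply Rmult_le_pos; nra).
  nra.
Qed.

Let rate := (c1 + 2 + 5 * c2) / ((1 - mu) / 2).

Lemma energy_succ_le r : (N <= r)%nat ->
  energy (S r) <= (1 + rate / sqrt (INR r) ^ 3) * energy r.
Proof.
  intros Hr. pose proof (energy_increment_le r Hr). pose proof (energy_lower r Hr).
  pose proof (gam_succ_ge r Hr). pose proof (sqrt_INR_ge_1 r ltac:(lia)).
  assert (Hw : 0 <= / sqrt (INR r) ^ 3) by (left; apply Rinv_0_lt_compat; lra).
  assert (Hmu : 0 < (1 - mu) / 2) by lra.
  set (Z := gam (S r) * (Cmod (d r) ^ 2 + Cmod (d (S r)) ^ 2)) in *.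
  assert (HZ : 0 <= Z).
  { apply Rmult_le_pos; [lra|]. pose proof (pow2_ge_0 (Cmod (d r))).
    pose proof (pow2_ge_0 (Cmod (d (S r)))). lra. }
  replace ((1 - mu) / 2 * gam (S r) * (Cmod (d r) ^ 2 + Cmod (d (S r)) ^ 2))
    with ((1 - mu) / 2 * Z) in * by (unfold Z; ring).
  replace ((c1 + 2 + 5 * c2) / sqrt (INR r) ^ 3 * gam (S r) * (Cmod (d r) ^ 2 + Cmod (d (S r)) ^ 2))
    with (rate / sqrt (INR r) ^ 3 * ((1 - mu) / 2 * Z)) in * by (unfold rate, Z; field; lra).
  assert (0 <= rate / sqrt (INR r) ^ 3).
  { apply Rmult_le_pos; [apply Rdiv_le_0_compat|]; lra. }
  nra.
Qed.

Lemma energy_bounded : exists M, forall r, (N <= r)%nat -> energy r <= M.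
Proof.
  assert (Hrate : 0 <= rate) by (apply Rdiv_le_0_compat; lra).
  exists (energy N * exp (6 * rate * / sqrt (INR N))).
  apply (discrete_gronwall energy (fun r => rate / sqrt (INR r) ^ 3)
                           (fun r => 6 * rate * / sqrt (INR r)) N).
  - intros r Hr. pose proof (energy_lower r Hr). pose proof (gam_succ_ge r Hr).
    pose proof (pow2_ge_0 (Cmod (d r))). pose proof (pow2_ge_0 (Cmod (d (S r)))).
    assert (0 <= (1 - mu) / 2 * gam (S r) * (Cmod (d r) ^ 2 + Cmod (d (S r)) ^ 2)).
    { apply Rmult_le_pos; [apply Rmult_le_pos|]; lra. }
    lra.
  - exact energy_succ_le.
  - intros r Hr. pose proof (inv_sqrt_pow3_le_diff r ltac:(lia)).
    unfold Rdiv. nra.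
  - intros r. pose proof (inv_sqrt_INR_nonneg r). nra.
Qed.

Lemma Cmod_sq_decay : exists K, forall r, (N <= r)%nat -> Cmod (d r) ^ 2 <= K / sqrt (INR r) ^ 3.
Proof.
  destruct energy_bounded as [M HM].
  exists (M / ((1 - mu) / 2)). intros r Hr.
  pose proof (energy_lower r Hr). pose proof (HM r Hr). pose proof (gam_succ_ge r Hr).
  pose proof (pow2_ge_0 (Cmod (d r))). pose proof (pow2_ge_0 (Cmod (d (S r)))).
  assert (Hmu : 0 < (1 - mu) / 2) by lra.
  set (s3 := sqrt (INR r) ^ 3) in *. set (X := Cmod (d r) ^ 2) in *.
  set (Y := Cmod (d (S r)) ^ 2) in *.
  apply Rmult_le_reg_r with ((1 - mu) / 2 * s3); [nra|].
  replace (M / ((1 - mu) / 2) / s3 * ((1 - mu) / 2 * s3)) with M by (field; lra).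
  assert (X * ((1 - mu) / 2 * s3) <= (1 - mu) / 2 * gam (S r) * X).
  { rewrite Rmult_comm. apply Rmult_le_compat_r; [lra|]. apply Rmult_le_compat_l; lra. }
  assert (0 <= (1 - mu) / 2 * gam (S r) * Y) by (apply Rmult_le_pos; [apply Rmult_le_pos|]; lra).
  lra.
Qed.

Theorem energy_summable : ex_series (fun r => Cmod (d r) ^ 2).
Proof.
  destruct Cmod_sq_decay as [K HK].
  apply (ex_series_incr_n _ N).
  apply (@ex_series_le R_AbsRing R_CompleteNormedModule _ (fun n => / sqrt (INR (N + n)) ^ 3 * K)).
  - intros n. change (Rabs (Cmod (d (N + n)) ^ 2) <= / sqrt (INR (N + n)) ^ 3 * K).
    rewrite Rabs_pos_eq, Rmult_comm by apply pow2_ge_0. apply HK. lia.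
  - apply ex_series_scal_r.
    apply (ex_series_incr_n (fun n => / sqrt (INR n) ^ 3) N), ex_series_inv_sqrt_pow3.
Qed.

End EnergyMethod.

Lemma recurrence_cleared (x y z : C) (G1 G2 a : R) : G2 <> 0 ->
  (z - (RtoC 1 + Ci * RtoC a) / RtoC G2 * y - RtoC G1 / RtoC G2 * x)%C = RtoC 0 ->
  (RtoC G2 * z = RtoC G1 * x + (1 + Ci * RtoC a) * y)%C.
Proof.
  intros HG Hrec.
  assert (HG' : RtoC G2 <> RtoC 0) by (intros E; apply HG; injection E; auto).
  replace z with ((RtoC 1 + Ci * RtoC a) / RtoC G2 * y + RtoC G1 / RtoC G2 * x)%C.
  - field. exact HG'.
  - rewrite <- (Cplus_0_l (_ + _)%C), <- Hrec. ring.
Qed.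

Section BetaWeights.

Variables k l n0 : nat.
Hypothesis l_lt_k : (l < k)%nat.
Hypothesis l_le_n0 : (l <= n0)%nat.

Definition beta_arg (r : nat) : R := INR n0 + INR r * INR (k - l) - INR k + 1.

Let gamma r := beta l k (Z.of_nat (n0 + r * (k - l))).

Lemma gamma_weight r : (1 <= r)%nat -> gamma r = weight k l (beta_arg r).
Proof.
  intros Hr. unfold gamma, beta, weight.
  assert (Hk : (k <= n0 + r * (k - l))%nat) by nia.
  rewrite !poch_rising by lia.
  replace (IZR (Z.of_nat (n0 + r * (k - l)) - Z.of_nat k + 1)) with (beta_arg r).
  - reflexivity.
  - unfold beta_arg. rewrite plus_IZR, minus_IZR, <- !INR_IZR_INZ, plus_INR, mult_INR. reflexivity.
Qed.

Lemma beta_arg_succ r : beta_arg (S r) = beta_arg r + INR (k - l).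
Proof. unfold beta_arg. rewrite S_INR. ring. Qed.

Lemma beta_arg_ge r : (1 <= r)%nat -> INR r <= beta_arg r.
Proof.
  intros Hr. unfold beta_arg. rewrite minus_INR by lia.
  assert (1 <= INR r) by (apply (le_INR 1), Hr).
  assert (INR l <= INR n0) by (apply le_INR, l_le_n0).
  assert (INR l + 1 <= INR k) by (rewrite <- S_INR; apply le_INR, l_lt_k).
  nra.
Qed.

Lemma gamma_pos r : (1 <= r)%nat -> 0 < gamma r.
Proof.
  intros Hr. rewrite gamma_weight by exact Hr. apply weight_pos.
  pose proof (beta_arg_ge r Hr). assert (1 <= INR r) by (apply (le_INR 1), Hr). lra.
Qed.

Lemma gamma_growth r : (3 <= k + l)%nat -> sqrt (INR r) ^ 3 <= gamma (S r).
Proof.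
  intros Hkl. rewrite gamma_weight by lia. pose proof (beta_arg_ge (S r) ltac:(lia)).
  rewrite S_INR in *. pose proof (pos_INR r).
  apply Rle_trans with (sqrt (beta_arg (S r)) ^ 3).
  - apply pow_incr. split; [apply sqrt_pos | apply sqrt_le_1_alt; lra].
  - apply weight_growth; [exact Hkl | lra].
Qed.

Lemma gamma_log_concave_defect r : (k - l <= r)%nat -> (1 <= r)%nat ->
  0 <= gamma (S (S r)) ^ 2 / gamma (S (S (S r))) - gamma (S r)
    <= 3 ^ (k + l) * INR (k - l) ^ 2 / sqrt (INR r) ^ 3 * gamma (S r).
Proof.
  intros HDr Hr. rewrite !gamma_weight by lia.
  rewrite (beta_arg_succ (S (S r))), !(beta_arg_succ (S r)).
  set (t := beta_arg (S r)). set (D := INR (k - l)).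
  replace (t + D + D) with (t + 2 * D) by ring.
  assert (Ht : INR (S r) <= t) by (apply beta_arg_ge; lia).
  assert (HD : D <= INR r) by (apply le_INR, HDr).
  assert (1 <= INR r) by (apply (le_INR 1), Hr). rewrite S_INR in Ht.
  assert (HD0 : 0 <= D) by apply pos_INR.
  destruct (weight_log_concave_defect k l t D ltac:(lra) ltac:(lra)) as [Hlow Hup].
  split; [exact Hlow|]. eapply Rle_trans; [exact Hup|].
  apply Rmult_le_compat_r; [left; apply weight_pos; lra|].
  unfold Rdiv. rewrite Rmult_assoc. apply Rmult_le_compat_l; [apply pow_le; lra|].
  rewrite Rpow_mult_distr, pow_inv. apply Rmult_le_compat_l; [apply pow2_ge_0|].
  pose proof (sqrt_INR_ge_1 r Hr). pose proof (pow2_sqrt (INR r) ltac:(lra)).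
  apply Rinv_le_contravar; [apply pow_lt; lra|].
  set (s := sqrt (INR r)) in *.
  assert (s ^ 3 <= s ^ 4) by (apply Rle_pow; [lra | lia]).
  assert (s ^ 4 <= t ^ 2) by (replace (s ^ 4) with ((s ^ 2) ^ 2) by ring; apply pow_incr; lra).
  lra.
Qed.

Lemma gamma_ratio_eventually theta : 0 <= theta < 1 ->
  exists N, forall r, (N <= r)%nat -> theta <= gamma (S r) / gamma (S (S r)).
Proof.
  intros Htheta.
  set (D := INR (k - l)). set (c := INR (k + l) * D).
  assert (HD : 0 <= D) by apply pos_INR.
  assert (Hc : 0 <= c) by (apply Rmult_le_pos; [apply pos_INR | exact HD]).
  destruct (INR_unbounded (c / (1 - theta ^ 2))) as [N HN].
  exists N. intros r Hr.
  assert (Hr1 : 1 <= INR (S r)) by (apply (le_INR 1); lia).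
  assert (HNr : INR N < INR (S r)) by (apply lt_INR; lia).
  rewrite !gamma_weight, (beta_arg_succ (S r)) by lia. fold D.
  set (t := beta_arg (S r)).
  assert (Ht : INR (S r) <= t) by (apply beta_arg_ge; lia).
  pose proof (weight_ratio_sq k l t D ltac:(lra) HD) as Hsq. fold c in Hsq.
  assert (Hct : c / t <= 1 - theta ^ 2).
  { apply Rmult_le_reg_r with t; [lra|]. unfold Rdiv. rewrite Rmult_assoc, Rinv_l by lra.
    apply Rmult_lt_compat_r with (r := 1 - theta ^ 2) in HN; [|nra].
    unfold Rdiv in HN. rewrite Rmult_assoc, Rinv_l in HN by nra.
    assert (0 <= (1 - theta ^ 2) * (t - INR N)) by (apply Rmult_le_pos; nra).
    nra. }
  assert (Hpos : 0 < weight k l t / weight k l (t + D)).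
  { apply Rdiv_lt_0_compat; apply weight_pos; lra. }
  set (q := weight k l t / weight k l (t + D)) in *.
  assert (Hq : theta ^ 2 <= q ^ 2) by lra.
  destruct (Rle_or_lt theta q) as [Hle | Hlt]; [exact Hle|].
  assert (q ^ 2 < theta ^ 2) by nra. lra.
Qed.

Variable f : nat -> R.
Hypothesis f_nonneg : forall n, 0 <= f n.

Definition delta_ratio (r : nat) : R :=
  f (n0 + (r + 1) * (k - l)) / beta l k (Z.of_nat (n0 + (r + 2) * (k - l))).

Lemma delta_ratio_nonneg r : 0 <= delta_ratio r.
Proof.
  unfold delta_ratio. replace (r + 2)%nat with (S (S r)) by lia.
  apply Rdiv_le_0_compat; [apply f_nonneg | apply gamma_pos; lia].
Qed.

Lemma delta_ratio_mul_gamma r : delta_ratio r * gamma (S (S r)) = f (n0 + S r * (k - l)).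
Proof.
  unfold delta_ratio, gamma. replace (r + 2)%nat with (S (S r)) by lia.
  replace (r + 1)%nat with (S r) by lia.
  field. apply Rgt_not_eq, gamma_pos. lia.
Qed.

Lemma recurrence_normal_form (d : nat -> C) r :
  (d (r + 2)%nat
   - (RtoC 1 + Ci * RtoC (f (n0 + (r + 1) * (k - l)))) / RtoC (gamma (r + 2)) * d (r + 1)%nat
   - RtoC (gamma (r + 1)) / RtoC (gamma (r + 2)) * d r)%C = RtoC 0 ->
  (RtoC (gamma (S (S r))) * d (S (S r))
   = RtoC (gamma (S r)) * d r + (1 + Ci * RtoC (delta_ratio r * gamma (S (S r)))) * d (S r))%C.
Proof.
  intros Hrec. rewrite delta_ratio_mul_gamma.
  replace (r + 2)%nat with (S (S r)) in Hrec by lia. replace (r + 1)%nat with (S r) in Hrec by lia.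
  apply recurrence_cleared; [apply Rgt_not_eq, gamma_pos; lia | exact Hrec].
Qed.

End BetaWeights.

Theorem lemma4p14 (k l n0 : nat) (f : nat -> R) (d : nat -> C)
  (Hlk : (l < k)%nat) (Hkl3 : (3 <= k + l)%nat)
  (Hn0l : (l <= n0)%nat) (Hn0k : (n0 < k)%nat)
  (Hf : forall n, 0 <= f n)
  (Hrec : forall r : nat,
     let Delta := (k - l)%nat in
     let gamma := fun r : nat => beta l k (Z.of_nat (n0 + r * Delta)) in
     let delta := fun r : nat => f (n0 + r * Delta)%nat in
     (d (r + 2)%nat
      - (RtoC 1 + Ci * RtoC (delta (r + 1)%nat)) / RtoC (gamma (r + 2)%nat) * d (r + 1)%nat
      - RtoC (gamma (r + 1)%nat) / RtoC (gamma (r + 2)%nat) * d r)%C = RtoC 0)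
  (lam : nat -> R)
  (Hasym : asymp_expansion
     (fun r => f (n0 + (r + 1) * (k - l))%nat
               / beta l k (Z.of_nat (n0 + (r + 2) * (k - l)))) lam)
  (Hkappa : lam 0%nat < 2) :
  ex_series (fun r => (Cmod (d r)) ^ 2).
Proof.
  change (asymp_expansion (delta_ratio k l n0 f) lam) in Hasym.
  set (mu := (Rmax (lam 0%nat) 0 + 2) / 4).
  assert (Hmu : lam 0%nat < 2 * mu /\ 1 / 2 <= mu < 1).
  { pose proof (Rmax_l (lam 0%nat) 0). pose proof (Rmax_r (lam 0%nat) 0).
    pose proof (Rmax_lub_lt (lam 0%nat) 0 2 Hkappa ltac:(lra)). unfold mu. lra. }
  destruct (asymp_expansion_eventually_le _ _ (2 * mu) Hasym ltac:(lra)) as [Ng Hg_le].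
  destruct (asymp_expansion_increment _ _ Hasym) as [c2 [Ni [Hc2 Hg_inc]]].
  destruct (gamma_ratio_eventually k l n0 Hlk Hn0l ((1 + mu) / 2) ltac:(lra)) as [Nr Hratio].
  apply (energy_summable (fun r => beta l k (Z.of_nat (n0 + r * (k - l)))) (delta_ratio k l n0 f) d
           mu (3 ^ (k + l) * INR (k - l) ^ 2) c2
           (Nat.max (Nat.max Ng Ni) (Nat.max Nr (Nat.max (k - l) 1)))).
  - lia.
  - lra.
  - apply Rmult_le_pos; [apply pow_le; lra | apply pow2_ge_0].
  - exact Hc2.
  - intros r _. apply recurrence_normal_form; [exact Hlk | exact Hn0l | exact (Hrec r)].
  - intros r _. apply gamma_growth; assumption.
  - intros r Hr. apply Hratio. lia.
  - intros r Hr. apply gamma_log_concave_defect; lia.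
  - intros r Hr. split; [apply delta_ratio_nonneg; assumption | apply Hg_le; lia].
  - intros r Hr. apply Hg_inc. lia.
Qed.
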